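(* Each member of $\mathcal{G}_2$ is cycle-extendable.
   Context: A half biwheel is obtained from a path $P$ of even length (possibly a single vertex) with color classes $A,B$, whose ends $u,v$ lie in $A$, by adding a new vertex $h$ (the hub) adjacent to every vertex of $A$; $u,v$ are the corners. $\mathcal{G}_2$ (double half biwheels) consists of the graphs obtained from two disjoint half biwheels $H_0,H_1$, neither isomorphic to $K_2$, with hubs $h_0,h_1$ and corners $u_0,v_0$ and $u_1,v_1$ respectively, by adding the four edges $h_1h_0$, $v_1v_0$, $u_0h_1$ and $h_0u_1$. A matching covered graph (connected, at least two vertices, every edge in a perfect matching) is cycle-extendable if for every even cycle $C$ the graph $G-V(C)$ has a perfect matching. *)

From mathcomp Require Import all_boot.
Set Implicit Arguments. Unset Strict Implicit. Unset Printing Implicit Defensive.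

Definition simple_graph (T : finType) (e : rel T) : Prop :=
  symmetric e /\ irreflexive e.

Definition perfect_matching_on (T : finType) (e : rel T) (S : {set T})
    (M : {set {set T}}) : Prop :=
  (forall m, m \in M -> exists x y, [/\ m = [set x; y], e x y, x \in S & y \in S])
  /\ (forall x, x \in S -> #|[set m in M | x \in m]| = 1).

Definition has_perfect_matching (T : finType) (e : rel T) (S : {set T}) : Prop :=
  exists M, perfect_matching_on e S M.

Definition matching_covered (T : finType) (e : rel T) : Prop :=
  [/\ 2 <= #|T|,
      (forall x y : T, connect e x y) &
      (forall x y : T, e x y ->
         exists M, perfect_matching_on e [set: T] M /\ [set x; y] \in M)].

Definition even_cycle (T : finType) (e : rel T) (c : seq T) : Prop :=
  [/\ uniq c, cycle e c, 3 <= size c & ~~ odd (size c)].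

Definition cycle_extendable (T : finType) (e : rel T) : Prop :=
  matching_covered e /\
  forall c : seq T, even_cycle e c -> has_perfect_matching e (~: [set x in c]).

(* Canonical half biwheel on a path P = p_0 p_1 ... p_{2k} (even length 2k)
   with hub h adjacent to all even-indexed path vertices (color class A).
   Vertices: Some i = p_i, None = hub. *)
Definition hbV (k : nat) : finType := option 'I_(k.*2).+1.

Definition hb_adj (k : nat) (x y : hbV k) : bool :=
  match x, y with
  | Some i, Some j => (i.+1 == j :> nat) || (j.+1 == i :> nat)
  | None, Some j => ~~ odd j
  | Some i, None => ~~ odd i
  | None, None => false
  end.

Definition hb_hub (k : nat) : hbV k := None.
Definition hb_u (k : nat) : hbV k := Some ord0.
Definition hb_v (k : nat) : hbV k := Some ord_max.

Definition dhbV (k0 k1 : nat) : finType := (hbV k0 + hbV k1)%type.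

Definition dhb_cross (k0 k1 : nat) (a : hbV k0) (b : hbV k1) : bool :=
  [|| (a == hb_hub k0) && (b == hb_hub k1),
      (a == hb_v k0) && (b == hb_v k1),
      (a == hb_u k0) && (b == hb_hub k1)
    | (a == hb_hub k0) && (b == hb_u k1)].

Definition dhb_adj (k0 k1 : nat) (x y : dhbV k0 k1) : bool :=
  match x, y with
  | inl a, inl b => hb_adj a b
  | inr a, inr b => hb_adj a b
  | inl a, inr b => dhb_cross a b
  | inr b, inl a => dhb_cross a b
  end.

(* (T, e) is a member of G_2: it is isomorphic to a double half biwheel whose
   two half biwheels are not K2, i.e. have paths of positive even length. *)
Definition in_G2 (T : finType) (e : rel T) : Prop :=
  exists k0 k1 : nat, exists f : dhbV k0 k1 -> T,
    [/\ 0 < k0, 0 < k1, bijective f &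
        forall x y, e (f x) (f y) = dhb_adj x y].

From mathcomp Require Import all_boot perm zify.
Set Implicit Arguments. Unset Strict Implicit. Unset Printing Implicit Defensive.

(* Each half of a double half biwheel is bipartite, with its hub on the side of the
   odd path vertices; the only edges joining equal colours are h0h1 and v0v1, and the
   four added edges are the only ones between the halves. An even cycle C crosses
   every cut an even number of times and, being even, uses an even number of
   monochromatic edges; hence C contains h0h1 iff it contains v0v1, and u0h1 iff
   h0u1. It follows that C meets each path P_i either not at all, and then avoids
   h_i, or in a subpath between two even vertices, and then passes through h_i.
   Pairing consecutive vertices of P_i outside that subpath, together with h_iu_i on
   a side avoided by C, is a perfect matching of G - V(C). Pairing the paths around
   one vertex on each side in the same way, and matching the four remaining vertices
   by two suitable edges, gives a perfect matching through any prescribed edge. *)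

Lemma sum_supp_seq (T : finType) (P : pred T) (F : T -> nat) (s : seq T) :
  uniq s -> all P s -> (forall x, P x -> x \notin s -> F x = 0) ->
  \sum_(x | P x) F x = \sum_(x <- s) F x.
Proof.
move=> s_uniq sP F0.
rewrite (bigID (mem s)) /= [X in _ + X]big1 ?addn0; last first.
  by move=> x /andP[Px xNs]; apply: F0.
rewrite big_uniq //; apply: eq_bigl => x.
by case xs: (x \in s); rewrite ?andbF ?andbT //; move/allP: sP => /(_ x xs).
Qed.

Section CycleNeighbours.
Variables (T : finType) (adj : rel T) (c : seq T).
Hypotheses (adj_sym : symmetric adj) (c_uniq : uniq c) (c_cycle : cycle adj c).
Hypothesis (c_size : 3 <= size c).

Definition cyc_adj x y := (x \in c) && ((y == next c x) || (y == prev c x)).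

Lemma next_neq_prev x : x \in c -> next c x != prev c x.
Proof.
case/rot_to=> i q rot_c.
have := c_size; rewrite -(size_rot i) rot_c.
have := c_uniq; rewrite -(rot_uniq i) rot_c.
rewrite -(next_rot i c_uniq) -(prev_rot i c_uniq) rot_c.
case: q {rot_c} => [|y [|z r]] // /and3P[xNyzr yNzr _] _.
have -> : next [:: x, y, z & r] x = y by rewrite /= eqxx.
rewrite prev_nth mem_head (memNindex xNyzr) /= -(last_nth x).
by apply: contraNneq yNzr => ->; rewrite mem_last.
Qed.

Lemma cyc_adj_meml x y : cyc_adj x y -> x \in c.
Proof. by case/andP. Qed.

Lemma cyc_adj_memr x y : cyc_adj x y -> y \in c.
Proof. by case/andP=> xc /orP[] /eqP ->; rewrite ?mem_next ?mem_prev. Qed.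

Lemma cyc_adjC : symmetric cyc_adj.
Proof.
suff imp x y : cyc_adj x y -> cyc_adj y x by move=> x y; apply/idP/idP; apply: imp.
move=> xy; rewrite /cyc_adj (cyc_adj_memr xy).
case/andP: xy => _ /orP[] /eqP ->; first by rewrite prev_next // eqxx orbT.
by rewrite next_prev // eqxx.
Qed.

Lemma cyc_adj_edge x y : cyc_adj x y -> adj x y.
Proof.
case/andP=> xc /orP[] /eqP ->; first exact: next_cycle.
by rewrite adj_sym; apply: prev_cycle.
Qed.

Lemma cyc_adj_next x : x \in c -> cyc_adj x (next c x).
Proof. by move=> xc; rewrite /cyc_adj xc eqxx. Qed.

Lemma cyc_adj_prev x : x \in c -> cyc_adj x (prev c x).
Proof. by move=> xc; rewrite /cyc_adj xc eqxx orbT. Qed.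

Lemma cyc_adj_pair x p q : x \in c ->
  (forall y, cyc_adj x y -> y = p \/ y = q) -> cyc_adj x p /\ cyc_adj x q.
Proof.
move=> xc pq; have := next_neq_prev xc.
have [xn xp] := (cyc_adj_next xc, cyc_adj_prev xc).
by case: (pq _ xn) => En; case: (pq _ xp) => Ep; rewrite En Ep ?eqxx in xn xp * => // _.
Qed.

Lemma cyc_adj_three x y1 y2 y3 : cyc_adj x y1 -> cyc_adj x y2 -> cyc_adj x y3 ->
  [|| y1 == y2, y1 == y3 | y2 == y3].
Proof. by do 3![case/andP=> _ /orP[] /eqP ->]; rewrite ?eqxx ?orbT. Qed.

Definition cyc_deg (W : rel T) x : nat :=
  if x \in c then W x (next c x) + W x (prev c x) else 0.

Lemma cyc_degE (W : rel T) x (ys : seq T) : uniq ys -> all (W x) ys ->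
  (forall y, adj x y -> W x y -> y \in ys) ->
  cyc_deg W x = \sum_(y <- ys) cyc_adj x y.
Proof.
move=> ys_uniq ysW Wys; rewrite /cyc_deg /cyc_adj; case: ifP => xc; last by rewrite big1.
have memW y : adj x y -> W x y = (y \in ys).
  by move=> xy; apply/idP/idP => [/(Wys _ xy)|/(allP ysW)].
have adj_prev : adj x (prev c x) by rewrite adj_sym; apply: prev_cycle.
rewrite memW ?(next_cycle c_cycle xc) // memW //.
have count_ys z : (z \in ys : nat) = \sum_(y <- ys) (y == z).
  by rewrite -count_uniq_mem // -sum1_count big_mkcond.
rewrite !count_ys -big_split /=; apply: eq_bigr => y _; have := next_neq_prev xc.
by case En: (y == next c x); case Ep: (y == prev c x); rewrite // -(eqP En) -(eqP Ep) eqxx.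
Qed.

Lemma cyc_deg_pair (W : rel T) x p q : cyc_adj x p -> cyc_adj x q -> p != q ->
  cyc_deg W x = W x p + W x q.
Proof.
move=> xp xq; rewrite /cyc_deg (cyc_adj_meml xp).
by case/andP: xp => _ /orP[] /eqP->; case/andP: xq => _ /orP[] /eqP->; rewrite ?eqxx // addnC.
Qed.

Lemma sum_next (F : T -> nat) : \sum_(x <- c) F (next c x) = \sum_(x <- c) F x.
Proof.
rewrite -(big_map (next c) xpredT); apply: perm_big; apply: uniq_perm => //.
- by rewrite (map_inj_uniq (can_inj (prev_next c_uniq))).
- move=> y; apply/mapP/idP => [[x xc ->]|yc]; first by rewrite mem_next.
  by exists (prev c y); rewrite ?mem_prev // next_prev.
Qed.

(* Every W-edge of c has exactly one end in S, so counting from S counts each once. *)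
Lemma sum_cyc_deg (W : rel T) (S : pred T) : symmetric W ->
  (forall x y, adj x y -> W x y -> S x != S y) ->
  \sum_(x | S x) cyc_deg W x = \sum_(x <- c) W x (next c x).
Proof.
move=> W_sym W_cut.
rewrite (@sum_supp_seq _ _ _ (filter S c)) ?filter_uniq ?filter_all //; last first.
  by move=> x Sx; rewrite mem_filter Sx /cyc_deg /= => /negbTE ->.
rewrite (@eq_big_seq _ _ _ _ _ _ (fun x => W x (next c x) + W x (prev c x))); last first.
  by move=> x; rewrite mem_filter /cyc_deg => /andP[_ ->].
rewrite big_filter [RHS](bigID S) big_split /=; congr (_ + _).
rewrite big_mkcond [RHS]big_mkcond -sum_next; apply: eq_big_seq => x xc /=.
rewrite prev_next // (W_sym (next c x)).
have := W_cut x (next c x) (next_cycle c_cycle xc).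
by case: (W x _); case: (S x); case: (S (next c x)) => // /(_ isT).
Qed.

Lemma odd_sum_neq_next (col : pred T) :
  ~~ odd (\sum_(x <- c) (col x != col (next c x))).
Proof.
have dbl : \sum_(x <- c) ((col x != col (next c x)) + (col x && col (next c x)).*2)
         = (\sum_(x <- c) col x).*2.
  rewrite -addnn -{1}(sum_next col) -big_split /=.
  by apply: eq_bigr => x _; case: (col x); case: (col (next c x)).
move: dbl; rewrite big_split /= -(big_morph double doubleD (erefl 0 : 0.*2 = 0)).
by move/(congr1 odd); rewrite oddD !odd_double addbF => ->.
Qed.

Lemma cut_parity (L : pred T) :
  ~~ odd (\sum_(x | ~~ L x) cyc_deg (fun x y => L x != L y) x).
Proof.
rewrite (sum_cyc_deg (S := fun x => ~~ L x)) ?odd_sum_neq_next //.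
- by move=> x y; rewrite eq_sym.
- by move=> x y _; case: (L x); case: (L y).
Qed.

Lemma monochromatic_parity (col S : pred T) : ~~ odd (size c) ->
  (forall x y, adj x y -> col x == col y -> S x != S y) ->
  ~~ odd (\sum_(x | S x) cyc_deg (fun x y => adj x y && (col x == col y)) x).
Proof.
move=> c_even S_cut; rewrite sum_cyc_deg; first last.
- by move=> x y xy /andP[_]; apply: S_cut.
- by move=> x y; rewrite adj_sym eq_sym.
have split_size : \sum_(x <- c) (col x != col (next c x)) +
    \sum_(x <- c) (adj x (next c x) && (col x == col (next c x))) = size c.
  rewrite -big_split -sum1_size big_seq [RHS]big_seq /=.
  by apply: eq_bigr => x xc; rewrite (next_cycle c_cycle xc); case: (col x) => /=; case: (col _).
by move: c_even; rewrite -split_size oddD (negbTE (odd_sum_neq_next col)).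
Qed.

End CycleNeighbours.

Definition matching_involution (T : finType) (e : rel T) (R : {set T}) (s : T -> T) :=
  forall x, x \in R -> [/\ s x \in R, s (s x) = x, s x != x & e x (s x)].

Lemma perfect_matching_of_involution (T : finType) (e : rel T) (R : {set T}) s :
  matching_involution e R s -> perfect_matching_on e R [set [set x; s x] | x in R].
Proof.
move=> s_inv; split=> [_ /imsetP[x xR ->]|x xR].
  by have [sxR _ _ xsx] := s_inv x xR; exists x, (s x).
have -> : [set m in [set [set y; s y] | y in R] | x \in m] = [set [set x; s x]].
  apply/setP => m; rewrite !inE; apply/andP/eqP => [[/imsetP[y yR ->]]|->].
    rewrite !inE => /orP[] /eqP ->; first by [].
    by have [_ -> _ _] := s_inv y yR; rewrite setUC.
  by rewrite !inE eqxx; split=> //; apply: imset_f.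
by rewrite cards1.
Qed.

Lemma tperm2_involution (T : finType) (e : rel T) (R : {set T}) p q p' q' :
  symmetric e -> uniq [:: p; q; p'; q'] -> e p q -> e p' q' ->
  {subset R <= [:: p; q; p'; q']} -> (p \in R) = (q \in R) -> (p' \in R) = (q' \in R) ->
  matching_involution e R (tperm p q \o tperm p' q').
Proof.
rewrite /= !inE !negb_or => e_sym /and4P[/and3P[pq pp' pq'] /andP[qp' qq'] p'q' _].
move=> epq ep'q' R4 pqR p'q'R; set s := _ \o _.
have sp : s p = q by rewrite /s /= (@tpermD _ p') 1?eq_sym // tpermL.
have sq : s q = p by rewrite /s /= (@tpermD _ p') 1?eq_sym // tpermR.
have sp' : s p' = q' by rewrite /s /= tpermL tpermD.
have sq' : s q' = p' by rewrite /s /= tpermR tpermD // eq_sym.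
move=> z zR; have := R4 z zR; rewrite !inE => /or4P[] /eqP Ez; rewrite Ez in zR *.
all: rewrite !(sp, sq, sp', sq'); split=> //.
- by rewrite -pqR.
- by rewrite eq_sym.
- by rewrite pqR.
- by rewrite e_sym.
- by rewrite -p'q'R.
- by rewrite eq_sym.
- by rewrite p'q'R.
- by rewrite e_sym.
Qed.

Lemma perfect_matching_on_image (T T' : finType) (e : rel T) (e' : rel T')
    (f : T' -> T) (S : {set T'}) (M : {set {set T'}}) :
  injective f -> (forall x y, e (f x) (f y) = e' x y) ->
  perfect_matching_on e' S M -> perfect_matching_on e (f @: S) [set f @: m | m : {set T'} in M].
Proof.
move=> f_inj ef [M_edges M_cover]; split=> [_ /imsetP[m mM ->]|_ /imsetP[x xS ->]].
  have [x [y [-> xy xS yS]]] := M_edges m mM.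
  by exists (f x), (f y); rewrite imsetU1 imset_set1 ef !imset_f.
have -> : [set A in [set f @: m | m : {set T'} in M] | f x \in A]
    = [set f @: m | m : {set T'} in [set m in M | x \in m]].
  apply/setP => A; rewrite !inE; apply/andP/imsetP => [[/imsetP[m mM ->]]|[m]].
    by rewrite mem_imset // => xm; exists m; rewrite // inE mM.
  by rewrite inE => /andP[mM xm] ->; rewrite mem_imset // imset_f.
by rewrite card_imset ?M_cover //; apply: imset_inj.
Qed.

Lemma cycle_extendable_iso (T T' : finType) (e : rel T) (e' : rel T') (f : T' -> T) :
  bijective f -> (forall x y, e (f x) (f y) = e' x y) ->
  cycle_extendable e' -> cycle_extendable e.
Proof.
move=> f_bij ef [[card2 conn' pm_edge'] pm_cycle'].
have [g fK gK] := f_bij; have f_inj := can_inj fK; have g_inj := can_inj gK.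
have e'E x y : e x y = e' (g x) (g y) by rewrite -ef !gK.
have imsetT : f @: [set: T'] = [set: T].
  by apply/setP => x; rewrite -[x]gK imset_f ?inE.
split; first split.
- by rewrite -(bij_eq_card f_bij).
- move=> x y; rewrite -[x]gK -[y]gK.
  have [p p_path ->] := connectP (conn' (g x) (g y)).
  apply/connectP; exists (map f p); last by rewrite last_map.
  by apply: homo_path p_path => a b; rewrite ef.
- move=> x y; rewrite e'E => /pm_edge'[M [M_pm xyM]].
  exists [set f @: m | m : {set T'} in M]; split.
    by rewrite -imsetT; apply: perfect_matching_on_image.
  by apply/imsetP; exists [set g x; g y]; rewrite // imsetU1 imset_set1 !gK.
- move=> c [c_uniq c_cycle c_size c_even].
  have [|M M_pm] := pm_cycle' (map g c).
    split; rewrite ?size_map ?(map_inj_uniq g_inj) //.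
    by rewrite cycle_map (eq_cycle (e' := e)) // => x y; rewrite /= e'E.
  exists [set f @: m | m : {set T'} in M].
  have -> : ~: [set x in c] = f @: (~: [set x in map g c]).
    by apply/setP => x; rewrite -[x]gK mem_imset // !inE gK (mem_map g_inj).
  exact: perfect_matching_on_image.
Qed.

Inductive or5 (P1 P2 P3 P4 P5 : Prop) : Prop :=
  Or51 of P1 | Or52 of P2 | Or53 of P3 | Or54 of P4 | Or55 of P5.
Notation "[ \/ P1 , P2 , P3 , P4 | P5 ]" := (or5 P1 P2 P3 P4 P5) : type_scope.

Lemma inordK_le n i : i <= n -> (inord i : 'I_n.+1) = i :> nat.
Proof. by move=> le_in; rewrite inordK. Qed.

Section DoubleHalfBiwheel.
Variables k0 k1 : nat.
Local Notation V := (dhbV k0 k1).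
Local Notation adj := (@dhb_adj k0 k1).

Definition va i : V := inl (Some (inord i)).
Definition vb i : V := inr (Some (inord i)).
Definition hub0 : V := inl None.
Definition hub1 : V := inr None.

Lemma vertex_cases (x : V) :
  [\/ exists2 i, i <= k0.*2 & x = va i, x = hub0,
      exists2 i, i <= k1.*2 & x = vb i | x = hub1].
Proof.
case: x => [[i|]|[i|]]; [apply: Or41 | apply: Or42 | apply: Or43 | apply: Or44] => //.
  by exists i; rewrite /va ?inord_val // -ltnS.
by exists i; rewrite /vb ?inord_val // -ltnS.
Qed.

Lemma va_eq i j : i <= k0.*2 -> j <= k0.*2 -> (va i == va j) = (i == j).
Proof.
move=> le_i le_j; apply/eqP/eqP => [eq_ij|-> //].
have := congr1 (fun x : V => if x is inl (Some a) then val a else 0) eq_ij.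
by rewrite /= !inordK_le.
Qed.

Lemma dhb_adj_sym : symmetric adj.
Proof. by move=> [[i|]|[i|]] [[j|]|[j|]] //=; rewrite /hb_adj orbC. Qed.

Lemma dhb_crossE (a : hbV k0) (b : hbV k1) : dhb_cross a b =
  match a, b with
  | Some i, Some j => (i == k0.*2 :> nat) && (j == k1.*2 :> nat)
  | Some i, None => i == 0 :> nat
  | None, Some j => j == 0 :> nat
  | None, None => true
  end.
Proof.
by case: a => [i|]; case: b => [j|];
  rewrite /dhb_cross /hb_hub /hb_v /hb_u ?(inj_eq Some_inj) ?andbF ?orbF ?andbT.
Qed.

Lemma va_nbr i y : i <= k0.*2 -> adj (va i) y ->
  [\/ y = va i.+1 /\ i < k0.*2, y = va i.-1 /\ 0 < i, y = hub0 /\ ~~ odd i,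
      y = hub1 /\ i = 0 | y = vb k1.*2 /\ i = k0.*2].
Proof.
move=> le_i; case: (vertex_cases y) => [[j le_j ->]|->|[j le_j ->]|->];
  rewrite /= ?dhb_crossE /hb_adj ?inordK_le //.
- by case/orP=> /eqP E; [apply: Or51 | apply: Or52]; rewrite -E; split=> //; lia.
- by move=> ev_i; apply: Or53.
- by case/andP=> /eqP-> /eqP->; apply: Or55.
- by move/eqP->; apply: Or54.
Qed.

Lemma vb_nbr i y : i <= k1.*2 -> adj (vb i) y ->
  [\/ y = vb i.+1 /\ i < k1.*2, y = vb i.-1 /\ 0 < i, y = hub1 /\ ~~ odd i,
      y = hub0 /\ i = 0 | y = va k0.*2 /\ i = k1.*2].
Proof.
move=> le_i; case: (vertex_cases y) => [[j le_j ->]|->|[j le_j ->]|->];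
  rewrite /= ?dhb_crossE /hb_adj ?inordK_le //.
- by case/andP=> /eqP-> /eqP->; apply: Or55.
- by move/eqP->; apply: Or54.
- by case/orP=> /eqP E; [apply: Or51 | apply: Or52]; rewrite -E; split=> //; lia.
- by move=> ev_i; apply: Or53.
Qed.

Lemma hub0_nbr y : adj hub0 y ->
  [\/ exists2 j, j <= k0.*2 & y = va j /\ ~~ odd j, y = hub1 | y = vb 0].
Proof.
case: (vertex_cases y) => [[j le_j ->]|->|[j le_j ->]|->]; rewrite /= ?dhb_crossE ?inordK_le //.
- by move=> ev_j; apply: Or31; exists j.
- by move/eqP->; apply: Or33.
- by move=> _; apply: Or32.
Qed.

Lemma hub1_nbr y : adj hub1 y ->
  [\/ exists2 j, j <= k1.*2 & y = vb j /\ ~~ odd j, y = hub0 | y = va 0].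
Proof.
case: (vertex_cases y) => [[j le_j ->]|->|[j le_j ->]|->]; rewrite /= ?dhb_crossE ?inordK_le //.
- by move/eqP->; apply: Or33.
- by move=> _; apply: Or32.
- by move=> ev_j; apply: Or31; exists j.
Qed.

Lemma adj_va_succ i : i < k0.*2 -> adj (va i) (va i.+1).
Proof. by move=> lt_i; rewrite /= /hb_adj !inordK_le ?eqxx // ltnW. Qed.

Lemma adj_vb_succ i : i < k1.*2 -> adj (vb i) (vb i.+1).
Proof. by move=> lt_i; rewrite /= /hb_adj !inordK_le ?eqxx // ltnW. Qed.

Lemma adj_hub0_va i : i <= k0.*2 -> ~~ odd i -> adj hub0 (va i).
Proof. by move=> le_i; rewrite /= inordK_le. Qed.

Lemma adj_hub1_vb i : i <= k1.*2 -> ~~ odd i -> adj hub1 (vb i).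
Proof. by move=> le_i; rewrite /= inordK_le. Qed.

Lemma adj_hub0_hub1 : adj hub0 hub1. Proof. by []. Qed.

Lemma adj_corners_v : adj (va k0.*2) (vb k1.*2).
Proof. by rewrite /= dhb_crossE !inordK_le ?eqxx. Qed.

Lemma adj_va0_hub1 : adj (va 0) hub1.
Proof. by rewrite /= dhb_crossE inordK_le. Qed.

Lemma adj_hub0_vb0 : adj hub0 (vb 0).
Proof. by rewrite /= dhb_crossE inordK_le. Qed.

Definition side0 (x : V) : bool := if x is inl _ then true else false.

Definition colour (x : V) : bool :=
  match x with inl (Some a) | inr (Some a) => odd a | _ => true end.

Lemma colour_va i : i <= k0.*2 -> colour (va i) = odd i.
Proof. by move=> le_i; rewrite /= inordK_le. Qed.

Lemma colour_vb i : i <= k1.*2 -> colour (vb i) = odd i.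
Proof. by move=> le_i; rewrite /= inordK_le. Qed.

Lemma monochromatic_edge_cross x y : adj x y -> colour x == colour y -> side0 x != side0 y.
Proof.
by case: x y => [[i|]|[i|]] [[j|]|[j|]] //=; rewrite /hb_adj -?modn2; lia.
Qed.

End DoubleHalfBiwheel.

Definition swapV k0 k1 (x : dhbV k0 k1) : dhbV k1 k0 :=
  match x with inl a => inr a | inr b => inl b end.

Lemma swapVK k0 k1 : cancel (@swapV k0 k1) (@swapV k1 k0).
Proof. by case. Qed.

Lemma dhb_adj_swapV k0 k1 (x y : dhbV k0 k1) : dhb_adj (swapV x) (swapV y) = dhb_adj x y.
Proof.
case: x y => [a|a] [b|b] //=; rewrite !dhb_crossE;
  by case: a => [?|]; case: b => [?|]; rewrite // andbC.
Qed.

Lemma exists_crossing (P : pred nat) i j : i <= j -> P i -> ~~ P j ->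
  exists2 t, i <= t < j & P t && ~~ P t.+1.
Proof.
move=> + Pi; elim: j => [|j IHj] le_ij Pj.
  by move: le_ij Pj; rewrite leqn0 => /eqP<-; rewrite Pi.
have le_ij' : i <= j by rewrite -ltnS ltn_neqAle le_ij andbT; apply: contraNneq Pj => <-.
case Pj': (P j); first by exists j; rewrite ?le_ij' ?ltnSn ?Pj'.
have [t /andP[le_it lt_tj] Pt] := IHj le_ij' (negbT Pj').
by exists t; rewrite // le_it ltnS ltnW.
Qed.

Definition even_interval n s t := [&& ~~ odd s, ~~ odd t, s <= t & t <= n].

Section EvenCycle.
Variables (k0 k1 : nat) (c : seq (dhbV k0 k1)).
Hypotheses (k0_gt0 : 0 < k0) (c_uniq : uniq c) (c_cycle : cycle (@dhb_adj k0 k1) c).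
Hypotheses (c_size : 3 <= size c) (c_even : ~~ odd (size c)).
Local Notation adj := (@dhb_adj k0 k1).
Local Notation nb := (cyc_adj c).
Local Notation va := (@va k0 k1).
Local Notation vb := (@vb k0 k1).
Local Notation hub0 := (@hub0 k0 k1).
Local Notation hub1 := (@hub1 k0 k1).
Local Notation adj_sym := (@dhb_adj_sym k0 k1).
Local Notation degE := (cyc_degE adj_sym c_uniq c_cycle c_size).
Local Notation nb_edge := (cyc_adj_edge adj_sym c_cycle).
Local Notation nb_pair := (cyc_adj_pair c_uniq c_size).

Lemma hub_edge_parity : nb hub0 hub1 = nb (va k0.*2) (vb k1.*2).
Proof.
pose W x y := adj x y && (colour x == colour y).
have deg_hub0 : cyc_deg c W hub0 = nb hub0 hub1.
  rewrite (degE (ys := [:: hub1])) ?big_seq1 //.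
  move=> y /hub0_nbr[[j le_j [-> ev_j]]|->|->] /andP[_];
    by rewrite ?mem_head ?colour_va ?colour_vb ?(negbTE ev_j).
have deg_top : cyc_deg c W (va k0.*2) = nb (va k0.*2) (vb k1.*2).
  rewrite (degE (ys := [:: vb k1.*2])) ?big_seq1 //.
    by rewrite /= andbT /W adj_corners_v colour_va ?colour_vb ?odd_double.
  move=> y /(va_nbr (leqnn _))[[_ lt]|[-> _]|[-> _]|[_ eq0]|[-> _]] /andP[_];
    rewrite ?mem_head ?colour_va ?odd_double //; try lia.
have := monochromatic_parity adj_sym c_uniq c_cycle c_even (@monochromatic_edge_cross k0 k1).
rewrite (@sum_supp_seq _ _ _ [:: hub0; va k0.*2]) //; last first.
  move=> x; case: (vertex_cases x) => [[i le_i ->]|->|[i le_i ->]|->] //= _.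
  rewrite !inE negb_or va_eq // => /andP[_ ne_i]; rewrite (degE (ys := [::])) ?big_nil //.
  move=> y /(va_nbr le_i)[[->]|[->]|[-> ev_i]|[-> ->]|[_ eq_i]] //=;
    by rewrite ?colour_va /= ?inordK_le ?oddS ?(negbTE ev_i) ?andbF //; lia.
rewrite !big_cons big_nil addn0 deg_hub0 deg_top.
by case: (nb _ _); case: (nb _ _).
Qed.

Lemma corner_edge_parity : nb (va 0) hub1 = nb hub0 (vb 0).
Proof.
pose W : rel (dhbV k0 k1) := fun x y => ~~ side0 x != ~~ side0 y.
have deg_hub0 : cyc_deg c W hub0 = nb hub0 hub1 + nb hub0 (vb 0).
  rewrite (degE (ys := [:: hub1; vb 0])) ?big_cons ?big_nil ?addn0 //.
  by move=> y /hub0_nbr[[j le_j [-> ev_j]]|->|->]; rewrite ?inE ?eqxx ?orbT.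
have deg_va0 : cyc_deg c W (va 0) = nb (va 0) hub1.
  rewrite (degE (ys := [:: hub1])) ?big_seq1 //.
  move=> y /(va_nbr (leq0n _))[[-> _]|[_ lt]|[-> _]|[-> _]|[-> eq0]] //.
  by rewrite ?mem_head //; lia.
have deg_top : cyc_deg c W (va k0.*2) = nb (va k0.*2) (vb k1.*2).
  rewrite (degE (ys := [:: vb k1.*2])) ?big_seq1 //.
  by move=> y /(va_nbr (leqnn _))[[->]|[->]|[->]|[-> eq0]|[->]]; rewrite ?mem_head //; lia.
have := cut_parity c_uniq c_cycle (fun x => ~~ side0 x).
rewrite (@sum_supp_seq _ _ _ [:: hub0; va 0; va k0.*2]) //; first last.
- move=> x; case: (vertex_cases x) => [[i le_i ->]|->|[i le_i ->]|->] //= _.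
  rewrite !inE !negb_or !va_eq // => /and3P[_ ne0 netop].
  rewrite (degE (ys := [::])) ?big_nil //.
  by move=> y /(va_nbr le_i)[[->]|[->]|[->]|[_ eq0]|[_ eqtop]] //; lia.
- by rewrite /= !inE va_eq //; lia.
rewrite !big_cons big_nil addn0 deg_hub0 deg_va0 deg_top -hub_edge_parity.
by case: (nb _ _); case: (nb _ _); case: (nb _ _).
Qed.

Lemma va_odd_on_cycle i : i <= k0.*2 -> odd i -> va i \in c ->
  va i.-1 \in c /\ va i.+1 \in c.
Proof.
move=> le_i odd_i ic.
have [] : nb (va i) (va i.-1) /\ nb (va i) (va i.+1).
  apply: nb_pair => // y /nb_edge/(va_nbr le_i)[[-> _]|[-> _]|[_ ev]|[_ eq0]|[_ eqtop]].
  - by right.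
  - by left.
  - by rewrite odd_i in ev.
  - by rewrite eq0 in odd_i.
  - by rewrite eqtop odd_double in odd_i.
by move=> /cyc_adj_memr-> /cyc_adj_memr->.
Qed.

Lemma va_exit_up t : t < k0.*2 -> va t \in c -> va t.+1 \notin c ->
  ~~ odd t /\ nb (va t) hub0.
Proof.
move=> lt_t tc t1Nc.
have ev_t : ~~ odd t.
  by apply/negP => odd_t; have [_ t1c] := va_odd_on_cycle (ltnW lt_t) odd_t tc; rewrite t1c in t1Nc.
split=> //; have [//] : nb (va t) (if t == 0 then hub1 else va t.-1) /\ nb (va t) hub0.
apply: nb_pair => // y nb_y.
case: (va_nbr (ltnW lt_t) (nb_edge nb_y)) => [[E _]|[-> t_gt0]|[-> _]|[-> ->]|[_ E]].
- by rewrite E in nb_y; rewrite (cyc_adj_memr nb_y) in t1Nc.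
- by left; rewrite lt0n in t_gt0; rewrite (negbTE t_gt0).
- by right.
- by left.
- by rewrite E ltnn in lt_t.
Qed.

Lemma va_exit_down s : 0 < s -> s <= k0.*2 -> va s \in c -> va s.-1 \notin c ->
  ~~ odd s /\ nb (va s) hub0.
Proof.
move=> s_gt0 le_s sc s1Nc.
have ev_s : ~~ odd s.
  by apply/negP => odd_s; have [s1c _] := va_odd_on_cycle le_s odd_s sc; rewrite s1c in s1Nc.
split=> //; have [//] : nb (va s) (if s == k0.*2 then vb k1.*2 else va s.+1) /\ nb (va s) hub0.
apply: nb_pair => // y nb_y.
case: (va_nbr le_s (nb_edge nb_y)) => [[-> lt_s]|[E _]|[-> _]|[_ E]|[-> ->]].
- by left; rewrite ltn_neqAle in lt_s; case/andP: lt_s => /negbTE->.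
- by rewrite E in nb_y; rewrite (cyc_adj_memr nb_y) in s1Nc.
- by right.
- by rewrite E in s_gt0.
- by left; rewrite eqxx.
Qed.

Lemma hub0_on_cycle : va 0 \in c -> hub0 \in c.
Proof.
move=> va0c; apply/negPn/negP => hub0Nc.
have [_ /[!corner_edge_parity]/cyc_adj_meml] : nb (va 0) (va 1) /\ nb (va 0) hub1.
  apply: nb_pair => // y nb_y.
  case: (va_nbr (leq0n _) (nb_edge nb_y)) => [[-> _]|[_ //]|[E _]|[-> _]|[_ E]].
  - by left.
  - by rewrite E in nb_y; rewrite (cyc_adj_memr nb_y) in hub0Nc.
  - by right.
  - by move: k0_gt0; rewrite -double_gt0 -E.
by rewrite (negbTE hub0Nc).
Qed.

Definition prefix0 j (x : dhbV k0 k1) : bool := if x is inl (Some a) then a < j else false.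

Lemma prefix0_va j m : m <= k0.*2 -> prefix0 j (va m) = (m < j).
Proof. by move=> le_m; rewrite /= inordK_le. Qed.

(* Besides the hubs, only p_j has neighbours in the prefix p_0 ... p_(j-1). *)
Lemma prefix0_cut_deg j x : j < k0.*2 -> va j \notin c -> ~~ prefix0 j x ->
  x \notin [:: hub0; hub1] -> cyc_deg c (fun x y => prefix0 j x != prefix0 j y) x = 0.
Proof.
move=> lt_j jNc NLx; rewrite !inE negb_or => /andP[xNh0 xNh1].
case xc: (x \in c); last by rewrite /cyc_deg xc.
rewrite (degE (ys := [::])) ?big_nil // => y.
case: (vertex_cases x) NLx xNh0 xNh1 xc => [[m le_m ->]|->|[m le_m ->]|->] //.
  rewrite prefix0_va // ltnNge negbK => le_jm _ _ mc.
  have lt_jm : j < m by rewrite ltn_neqAle le_jm andbT; apply: contraNneq jNc => ->.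
  rewrite le_jm /=; case/(va_nbr le_m) => [[-> lt_m]|[-> m_gt0]|[-> _]|[-> _]|[-> _]] //.
    by rewrite prefix0_va // ltnNge (leqW le_jm).
  by rewrite prefix0_va ?(leq_trans (leq_pred m)) // prednK // leqNgt lt_jm.
case: (vertex_cases y) => [[a le_a ->]|->|[a le_a ->]|->] //.
rewrite prefix0_va // /= dhb_crossE !inordK_le // => _ _ _ _ /andP[/eqP-> _].
by rewrite ltnNge (ltnW lt_j).
Qed.

(* A gap at p_j leaves h0 as the only vertex above the cut below p_j with a
   cycle-neighbour below it, and it has exactly one: an odd number of crossings. *)
Lemma va_cycle_convex i j l : i < j -> j < l -> l <= k0.*2 ->
  va i \in c -> va l \in c -> va j \in c.
Proof.
move=> lt_ij lt_jl le_l ic lc; apply/negPn/negP => jNc.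
have [t /andP[le_it lt_tj] /andP[tc t1Nc]] :=
  exists_crossing (P := fun m => va m \in c) (ltnW lt_ij) ic jNc.
have := exists_crossing (P := fun m => va m \notin c) (ltnW lt_jl) jNc.
rewrite negbK => /(_ lc) [s /andP[le_js lt_sl] /andP[sNc /negPn s1c]].
have lt_jtop : j < k0.*2 := leq_trans lt_jl le_l.
have lt_t : t < k0.*2 := ltn_trans lt_tj lt_jtop.
have le_s1 : s.+1 <= k0.*2 := leq_trans lt_sl le_l.
have lt_ts : t < s.+1 := leq_trans lt_tj (leqW le_js).
have [_ t_hub0] := va_exit_up lt_t tc t1Nc.
have [_ s_hub0] := va_exit_down (ltn0Sn _) le_s1 s1c sNc.
rewrite cyc_adjC // in t_hub0; rewrite cyc_adjC // in s_hub0.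
pose W : rel (dhbV k0 k1) := fun x y => prefix0 j x != prefix0 j y.
have ne_ts : va t != va s.+1 by rewrite va_eq ?(ltn_eqF lt_ts) // ltnW.
have deg_hub0 : cyc_deg c W hub0 = 1.
  rewrite (cyc_deg_pair W t_hub0 s_hub0 ne_ts) /W !prefix0_va ?(ltnW lt_t) //.
  by rewrite lt_tj ltnNge (leqW le_js).
have deg_hub1 : cyc_deg c W hub1 = 0.
  rewrite (degE (ys := [:: va 0])) ?big_seq1 //=; last first.
  - by move=> y /hub1_nbr[[m le_m [-> _]]|->|->]; rewrite ?mem_head.
  - by rewrite /W prefix0_va //= andbT (leq_ltn_trans (leq0n i) lt_ij).
  rewrite cyc_adjC // corner_edge_parity; case hub0_vb0: (nb hub0 (vb 0)) => //.
  by have := cyc_adj_three t_hub0 s_hub0 hub0_vb0; rewrite (negbTE ne_ts).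
have := cut_parity c_uniq c_cycle (prefix0 j); rewrite -/W.
rewrite (@sum_supp_seq _ _ _ [:: hub0; hub1]) //; last first.
  by move=> x NLx xNh; apply: prefix0_cut_deg.
by rewrite !big_cons big_nil deg_hub0 deg_hub1.
Qed.

Lemma va_cycle_interval : (exists2 i, i <= k0.*2 & va i \in c) ->
  hub0 \in c /\ exists s t, even_interval k0.*2 s t /\
    forall i, i <= k0.*2 -> (va i \in c) = (s <= i <= t).
Proof.
case=> i le_i ic; pose P i := (i <= k0.*2) && (va i \in c).
have exP : exists i, P i by exists i; rewrite /P le_i.
have [s /andP[le_s sc] min_s] := ex_minnP exP.
have ubP m : P m -> m <= k0.*2 by case/andP.
have [t /andP[le_t tc] max_t] := ex_maxnP exP ubP.
have le_st : s <= t by apply: min_s; rewrite /P le_t.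
have in_c m : m <= k0.*2 -> (va m \in c) = (s <= m <= t).
  move=> le_m; apply/idP/andP => [mc|[le_sm le_mt]].
    by split; [apply: min_s | apply: max_t]; rewrite /P le_m.
  case: ltngtP le_sm => // [lt_sm _|<- //]; case: ltngtP le_mt => // [lt_mt _|-> //].
  exact: va_cycle_convex lt_sm lt_mt le_t sc tc.
have s1Nc : 0 < s -> va s.-1 \notin c.
  by move=> s_gt0; rewrite in_c ?(leq_trans (leq_pred s)) // leqNgt ltn_predL s_gt0.
have ev_s : ~~ odd s.
  by case: (posnP s) => [-> //|s_gt0]; apply: (va_exit_down s_gt0 le_s sc (s1Nc s_gt0)).1.
have ev_t : ~~ odd t.
  case: ltngtP le_t => // [lt_t _|-> _]; last by rewrite odd_double.
  by apply: (va_exit_up lt_t tc _).1; rewrite in_c // ltnn andbF.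
split; last by exists s, t; rewrite /even_interval ev_s ev_t le_st le_t.
case: (posnP s) => [s0|s_gt0]; first by apply: hub0_on_cycle; rewrite -s0.
by have [_ /cyc_adj_memr] := va_exit_down s_gt0 le_s sc (s1Nc s_gt0).
Qed.

Lemma va_cycle_trace : exists s t, [/\ even_interval k0.*2 s t, hub0 \notin c -> s = 0 /\ t = 0 &
  forall i, i <= k0.*2 -> (va i \in c) = (hub0 \in c) && (s <= i <= t)].
Proof.
case h0c: (hub0 \in c); last first.
  exists 0, 0; split=> // i le_i; apply/negbTE/negP => ic.
  by have [] := va_cycle_interval (ex_intro2 _ _ i le_i ic); rewrite h0c.
have [|_ [s [t [int_st in_c]]]] := va_cycle_interval.
  case: (boolP [exists i : 'I_(k0.*2).+1, va i \in c]) => [/existsP[i ic]|/existsPn vaNc].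
    by exists i; rewrite // -ltnS.
  have [_] : nb hub0 hub1 /\ nb hub0 (vb 0).
    apply: nb_pair => // y nb_y; case: (hub0_nbr (nb_edge nb_y)) => [[j le_j [E _]]|->|->].
    - by have := vaNc (Ordinal (le_j : j < (k0.*2).+1)); rewrite -E (cyc_adj_memr nb_y).
    - by left.
    - by right.
  by rewrite -corner_edge_parity => /cyc_adj_meml; rewrite (negbTE (vaNc ord0)).
by exists s, t; split=> // i le_i; rewrite in_c.
Qed.

End EvenCycle.

Lemma vb_cycle_trace k0 k1 (c : seq (dhbV k0 k1)) :
  0 < k1 -> uniq c -> cycle (@dhb_adj k0 k1) c -> 3 <= size c -> ~~ odd (size c) ->
  exists s t, [/\ even_interval k1.*2 s t, hub1 k0 k1 \notin c -> s = 0 /\ t = 0 &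
    forall i, i <= k1.*2 -> (vb k0 k1 i \in c) = (hub1 k0 k1 \in c) && (s <= i <= t)].
Proof.
move=> k1_gt0 c_uniq c_cycle c_size c_even.
have mem_swap x : (swapV x \in map (@swapV k0 k1) c) = (x \in c).
  by rewrite (mem_map (can_inj (@swapVK k0 k1))).
have [||||s [t [int hub_t in_c]]] := va_cycle_trace (c := map (@swapV k0 k1) c) k1_gt0.
- by rewrite (map_inj_uniq (can_inj (@swapVK k0 k1))).
- by rewrite cycle_map (eq_cycle (e' := @dhb_adj k0 k1)) // => x y; rewrite /= dhb_adj_swapV.
- by rewrite size_map.
- by rewrite size_map.
exists s, t; split=> //; first by rewrite -mem_swap.
by move=> i le_i; rewrite -!mem_swap; apply: in_c.
Qed.

Definition path_mate s i :=
  if i < s then (if odd i then i.-1 else i.+1) else (if odd i then i.+1 else i.-1).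

Lemma path_mateP k s t i : even_interval k.*2 s t -> i <= k.*2 -> ~~ (s <= i <= t) ->
  [/\ path_mate s i <= k.*2, ~~ (s <= path_mate s i <= t), path_mate s (path_mate s i) = i &
      (i.+1 == path_mate s i) || ((path_mate s i).+1 == i)].
Proof.
case/and4P=> ev_s ev_t le_st le_tn le_in off_i.
have := odd_double_half s; have := odd_double_half t; have := odd_double_half i.
rewrite (negbTE ev_s) (negbTE ev_t) /path_mate.
case: (ltnP i s) => [lt_is|le_si]; case odd_i: (odd i) => /= Ei Et Es.
- case: i odd_i lt_is le_in off_i Ei => [//|i] /= odd_i lt_is le_in off_i Ei.
  rewrite (ltn_trans (ltnSn i) lt_is) (negbTE odd_i); split; lia.
- have -> : i.+1 < s by lia.
  by rewrite /= odd_i /= ?odd_i; split; lia.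
- have -> : (i.+1 < s) = false by lia.
  by rewrite /= odd_i /= ?odd_i; split; lia.
- case: i odd_i le_si le_in off_i Ei => [|i] /= odd_i le_si le_in off_i Ei; first lia.
  have -> : (i < s) = false by lia.
  by move/negbFE: odd_i => ->; split; lia.
Qed.

Lemma path_mate_ord k s t (a : 'I_(k.*2).+1) : even_interval k.*2 s t -> ~~ (s <= a <= t) ->
  let b : 'I_(k.*2).+1 := inord (path_mate s a) in
  [/\ ~~ (s <= b <= t), inord (path_mate s b) = a, b != a & hb_adj (Some a) (Some b)].
Proof.
move=> int_st off_a /=; have le_a : a <= k.*2 by rewrite -ltnS.
have [le_b off_b bK adj_ab] := path_mateP int_st le_a off_a.
rewrite inordK_le // bK inord_val; split=> //.
apply: contraTneq adj_ab => /(congr1 val) /=; rewrite inordK_le // => ->.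
by rewrite orbb (gtn_eqF (ltnSn a)).
Qed.

Section PathExtension.
Variables k0 k1 : nat.
Local Notation V := (dhbV k0 k1).
Local Notation adj := (@dhb_adj k0 k1).

Definition in_core s0 t0 s1 t1 (x : V) : bool :=
  match x with
  | inl (Some a) => s0 <= a <= t0
  | inr (Some b) => s1 <= b <= t1
  | _ => true
  end.

Definition path_extension s0 t0 s1 t1 (sp : V -> V) (x : V) : V :=
  match x with
  | inl (Some a) => if s0 <= a <= t0 then sp x else inl (Some (inord (path_mate s0 a)))
  | inr (Some b) => if s1 <= b <= t1 then sp x else inr (Some (inord (path_mate s1 b)))
  | _ => sp x
  end.

Lemma path_extension_core s0 t0 s1 t1 sp x :
  in_core s0 t0 s1 t1 x -> path_extension s0 t0 s1 t1 sp x = sp x.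
Proof. by case: x => [[a|]|[a|]] //= ->. Qed.

Lemma in_core_va s0 t0 s1 t1 i : i <= k0.*2 ->
  in_core s0 t0 s1 t1 (va k0 k1 i) = (s0 <= i <= t0).
Proof. by move=> le_i; rewrite /= inordK_le. Qed.

Lemma in_core_vb s0 t0 s1 t1 i : i <= k1.*2 ->
  in_core s0 t0 s1 t1 (vb k0 k1 i) = (s1 <= i <= t1).
Proof. by move=> le_i; rewrite /= inordK_le. Qed.

Lemma path_extension_va s0 t0 s1 t1 sp i : i <= k0.*2 -> ~~ (s0 <= i <= t0) ->
  path_extension s0 t0 s1 t1 sp (va k0 k1 i) = va k0 k1 (path_mate s0 i).
Proof. by move=> le_i off_i; rewrite /= inordK_le // (negbTE off_i). Qed.

Lemma path_extension_vb s0 t0 s1 t1 sp i : i <= k1.*2 -> ~~ (s1 <= i <= t1) ->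
  path_extension s0 t0 s1 t1 sp (vb k0 k1 i) = vb k0 k1 (path_mate s1 i).
Proof. by move=> le_i off_i; rewrite /= inordK_le // (negbTE off_i). Qed.

Lemma path_extension_involution s0 t0 s1 t1 sp (R : {set V}) :
  even_interval k0.*2 s0 t0 -> even_interval k1.*2 s1 t1 ->
  (forall x, ~~ in_core s0 t0 s1 t1 x -> x \in R) ->
  matching_involution adj (R :&: [set x | in_core s0 t0 s1 t1 x]) sp ->
  matching_involution adj R (path_extension s0 t0 s1 t1 sp).
Proof.
move=> int0 int1 offR sp_inv x xR; case core_x: (in_core s0 t0 s1 t1 x).
  have [] := sp_inv x; first by rewrite !inE xR.
  rewrite !inE => /andP[sxR core_sx] sxx ne_sx adj_sx.
  by rewrite !path_extension_core.
case: x xR core_x => [[a|]|[a|]] //= xR /negbT off_a.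
  have [off_b bK ne_ba adj_ab] := path_mate_ord int0 off_a.
  by rewrite (negbTE off_a) /= (negbTE off_b) bK offR //
    (inj_eq (@inl_inj _ _)) (inj_eq (@Some_inj _)).
have [off_b bK ne_ba adj_ab] := path_mate_ord int1 off_a.
by rewrite (negbTE off_a) /= (negbTE off_b) bK offR //
  (inj_eq (@inr_inj _ _)) (inj_eq (@Some_inj _)).
Qed.

End PathExtension.

Section Matchings.
Variables k0 k1 : nat.
Hypotheses (k0_gt0 : 0 < k0) (k1_gt0 : 0 < k1).
Local Notation V := (dhbV k0 k1).
Local Notation adj := (@dhb_adj k0 k1).
Local Notation va := (@va k0 k1).
Local Notation vb := (@vb k0 k1).
Local Notation hub0 := (@hub0 k0 k1).
Local Notation hub1 := (@hub1 k0 k1).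

Lemma in_core_points a0 b0 x : a0 <= k0.*2 -> b0 <= k1.*2 ->
  in_core a0 a0 b0 b0 x = (x \in [:: hub0; va a0; hub1; vb b0]).
Proof.
move=> le_a le_b; apply/idP/idP => [|/[!inE]/or4P[]/eqP->]; last first.
- by rewrite in_core_vb ?leqnn.
- by [].
- by rewrite in_core_va ?leqnn.
- by [].
case: (vertex_cases x) => [[i le_i ->]|->|[i le_i ->]|->];
  rewrite ?in_core_va ?in_core_vb // -eqn_leq !inE => /eqP->; by rewrite eqxx ?orbT.
Qed.

Lemma point_template_involution a0 b0 p q p' q' :
  ~~ odd a0 -> a0 <= k0.*2 -> ~~ odd b0 -> b0 <= k1.*2 ->
  perm_eq [:: p; q; p'; q'] [:: hub0; va a0; hub1; vb b0] -> adj p q -> adj p' q' ->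
  matching_involution adj [set: V] (path_extension a0 a0 b0 b0 (tperm p q \o tperm p' q')).
Proof.
move=> ev_a le_a ev_b le_b pq_core epq ep'q'.
have int_a : even_interval k0.*2 a0 a0 by rewrite /even_interval ev_a leqnn.
have int_b : even_interval k1.*2 b0 b0 by rewrite /even_interval ev_b leqnn.
have coreE x : (x \in [set: V] :&: [set x | in_core a0 a0 b0 b0 x]) = (x \in [:: p; q; p'; q']).
  by rewrite in_setI in_setT in_set in_core_points // (perm_mem pq_core).
apply: path_extension_involution => //.
apply: tperm2_involution; rewrite ?(perm_uniq pq_core) ?coreE ?inE ?eqxx ?orbT //.
- exact: dhb_adj_sym.
- by move=> x; rewrite coreE.
Qed.

Definition hub_template a0 b0 :=
  path_extension a0 a0 b0 b0 (tperm hub0 (va a0) \o tperm hub1 (vb b0)).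
Definition top_template := path_extension k0.*2 k0.*2 k1.*2 k1.*2
  (tperm hub0 hub1 \o tperm (va k0.*2) (vb k1.*2)).
Definition bottom_template :=
  path_extension 0 0 0 0 (tperm hub0 (vb 0) \o tperm (va 0) hub1).

Definition template_edge x y :=
  exists s, matching_involution adj [set: V] s /\ s x = y.

Lemma template_edgeC x y : template_edge x y -> template_edge y x.
Proof. by case=> s [s_inv <-]; exists s; have [_ -> _ _] := s_inv x (in_setT x). Qed.

Lemma hub_template_involution a0 b0 : ~~ odd a0 -> a0 <= k0.*2 -> ~~ odd b0 -> b0 <= k1.*2 ->
  matching_involution adj [set: V] (hub_template a0 b0).
Proof.
move=> ev_a le_a ev_b le_b.
by apply: point_template_involution; rewrite ?perm_refl ?adj_hub0_va ?adj_hub1_vb.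
Qed.

Lemma top_template_involution : matching_involution adj [set: V] top_template.
Proof.
apply: point_template_involution; rewrite ?odd_double ?adj_corners_v //.
by rewrite perm_cons (perm_catCA [:: hub1] [:: va k0.*2] [:: vb k1.*2]).
Qed.

Lemma bottom_template_involution : matching_involution adj [set: V] bottom_template.
Proof.
apply: point_template_involution; rewrite ?adj_hub0_vb0 ?adj_va0_hub1 //.
by rewrite perm_cons (perm_catC [:: vb 0] [:: va 0; hub1]).
Qed.

Lemma va_succ_edge i : i < k0.*2 -> template_edge (va i) (va i.+1).
Proof.
move=> lt_i; have le_i := ltnW lt_i; case odd_i: (odd i).
  have i_gt0 : 0 < i by case: i odd_i {lt_i le_i}.
  exists (hub_template 0 0); split; first exact: hub_template_involution.
  by rewrite /hub_template path_extension_va /= -?ltnNge // /path_mate ltn0 odd_i.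
exists (hub_template k0.*2 0); split; first by apply: hub_template_involution; rewrite ?odd_double.
by rewrite /hub_template path_extension_va ?/path_mate ?lt_i ?odd_i // negb_and -ltnNge lt_i.
Qed.

Lemma vb_succ_edge i : i < k1.*2 -> template_edge (vb i) (vb i.+1).
Proof.
move=> lt_i; have le_i := ltnW lt_i; case odd_i: (odd i).
  have i_gt0 : 0 < i by case: i odd_i {lt_i le_i}.
  exists (hub_template 0 0); split; first exact: hub_template_involution.
  by rewrite /hub_template path_extension_vb /= -?ltnNge // /path_mate ltn0 odd_i.
exists (hub_template 0 k1.*2); split; first by apply: hub_template_involution; rewrite ?odd_double.
by rewrite /hub_template path_extension_vb ?/path_mate ?lt_i ?odd_i // negb_and -ltnNge lt_i.
Qed.

Lemma hub0_va_edge i : i <= k0.*2 -> ~~ odd i -> template_edge hub0 (va i).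
Proof.
move=> le_i ev_i; exists (hub_template i 0); split; first exact: hub_template_involution.
by rewrite /hub_template path_extension_core //= (@tpermD _ hub1) // tpermL.
Qed.

Lemma hub1_vb_edge i : i <= k1.*2 -> ~~ odd i -> template_edge hub1 (vb i).
Proof.
move=> le_i ev_i; exists (hub_template 0 i); split; first exact: hub_template_involution.
by rewrite /hub_template path_extension_core //= tpermL tpermD.
Qed.

Lemma hub0_hub1_edge : template_edge hub0 hub1.
Proof.
exists top_template; split; first exact: top_template_involution.
by rewrite /top_template path_extension_core //= (@tpermD _ (va _)) // tpermL.
Qed.

Lemma corners_v_edge : template_edge (va k0.*2) (vb k1.*2).
Proof.
exists top_template; split; first exact: top_template_involution.
by rewrite /top_template path_extension_core ?in_core_va ?leqnn //= tpermL tpermD.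
Qed.

Lemma va0_hub1_edge : template_edge (va 0) hub1.
Proof.
exists bottom_template; split; first exact: bottom_template_involution.
by rewrite /bottom_template path_extension_core ?in_core_va //= tpermL tpermD.
Qed.

Lemma hub0_vb0_edge : template_edge hub0 (vb 0).
Proof.
exists bottom_template; split; first exact: bottom_template_involution.
by rewrite /bottom_template path_extension_core //= (@tpermD _ (va _)) // tpermL.
Qed.

Lemma adj_template_edge x y : adj x y -> template_edge x y.
Proof.
case: (vertex_cases x) => [[i le_i ->]|->|[i le_i ->]|->].
- case/(va_nbr le_i) => [[-> lt_i]|[-> i_gt0]|[-> ev_i]|[-> ->]|[-> ->]].
  + exact: va_succ_edge.
  + by apply: template_edgeC; have := va_succ_edge (i := i.-1); rewrite prednK // => /(_ le_i).
  + exact/template_edgeC/hub0_va_edge.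
  + exact: va0_hub1_edge.
  + exact: corners_v_edge.
- by case/hub0_nbr => [[j le_j [-> ev_j]]|->|->];
    [apply: hub0_va_edge | apply: hub0_hub1_edge | apply: hub0_vb0_edge].
- case/(vb_nbr le_i) => [[-> lt_i]|[-> i_gt0]|[-> ev_i]|[-> ->]|[-> ->]].
  + exact: vb_succ_edge.
  + by apply: template_edgeC; have := vb_succ_edge (i := i.-1); rewrite prednK // => /(_ le_i).
  + exact/template_edgeC/hub1_vb_edge.
  + exact/template_edgeC/hub0_vb0_edge.
  + exact/template_edgeC/corners_v_edge.
- by case/hub1_nbr => [[j le_j [-> ev_j]]|->|->];
    [apply: hub1_vb_edge | apply/template_edgeC/hub0_hub1_edge
    | apply/template_edgeC/va0_hub1_edge].
Qed.

Lemma connect_hub0 v : connect adj hub0 v.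
Proof.
have conn_va i : i <= k0.*2 -> connect adj hub0 (va i).
  elim: i => [|i IHi] le_i; first exact/connect1/adj_hub0_va.
  by apply: connect_trans (IHi (ltnW le_i)) (connect1 _); apply: adj_va_succ.
have conn_vb i : i <= k1.*2 -> connect adj hub0 (vb i).
  elim: i => [|i IHi] le_i; first exact/connect1/adj_hub0_vb0.
  by apply: connect_trans (IHi (ltnW le_i)) (connect1 _); apply: adj_vb_succ.
case: (vertex_cases v) => [[i le_i ->]|->|[i le_i ->]|->]; first exact: conn_va.
- exact: connect0.
- exact: conn_vb.
- exact/connect1/adj_hub0_hub1.
Qed.

(* On each side the cycle either avoids the hub and the path, or passes through the
   hub and an even interval of the path; what it leaves of the core is {h_i, u_i} or
   nothing. *)
Lemma cycle_complement_involution c : uniq c -> cycle adj c -> 3 <= size c ->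
  ~~ odd (size c) -> exists s, matching_involution adj (~: [set x in c]) s.
Proof.
move=> c_uniq c_cycle c_size c_even.
have [s0 [t0 [int0 hub0_t0 in_c0]]] := va_cycle_trace k0_gt0 c_uniq c_cycle c_size c_even.
have [s1 [t1 [int1 hub1_t1 in_c1]]] := vb_cycle_trace k1_gt0 c_uniq c_cycle c_size c_even.
have core0 i : hub0 \notin c -> (s0 <= i <= t0) = (i == 0).
  by case/hub0_t0=> -> ->; rewrite -eqn_leq eq_sym.
have core1 i : hub1 \notin c -> (s1 <= i <= t1) = (i == 0).
  by case/hub1_t1=> -> ->; rewrite -eqn_leq eq_sym.
exists (path_extension s0 t0 s1 t1 (tperm hub0 (va 0) \o tperm hub1 (vb 0))).
apply: path_extension_involution => //.
  move=> x; rewrite !inE; case: (vertex_cases x) => [[i le_i ->]|->|[i le_i ->]|->] //.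
    by rewrite in_core_va // in_c0 // => /negbTE->; rewrite andbF.
  by rewrite in_core_vb // in_c1 // => /negbTE->; rewrite andbF.
apply: tperm2_involution => //.
- exact: dhb_adj_sym.
- exact: adj_hub0_va.
- exact: adj_hub1_vb.
- move=> x; rewrite !inE; case: (vertex_cases x) => [[i le_i ->]|->|[i le_i ->]|->] //.
    rewrite in_core_va // in_c0 // negb_and => /andP[/orP[h0Nc|/negbTE->] //].
    by rewrite core0 // => /eqP->; rewrite eqxx orbT.
  rewrite in_core_vb // in_c1 // negb_and => /andP[/orP[h1Nc|/negbTE->] //].
  by rewrite core1 // => /eqP->; rewrite eqxx !orbT.
- rewrite !inE in_core_va // in_c0 //; case: (boolP (hub0 \in c)) => /= [_|h0Nc].
    by case: (s0 <= 0); case: (0 <= t0).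
  by rewrite core0.
rewrite !inE in_core_vb // in_c1 //; case: (boolP (hub1 \in c)) => /= [_|h1Nc].
  by case: (s1 <= 0); case: (0 <= t1).
by rewrite core1.
Qed.

Theorem dhb_cycle_extendable : cycle_extendable adj.
Proof.
split; first split.
- by apply: leq_trans (max_card [set hub0; hub1]); rewrite cards2.
- move=> x y; apply: connect_trans (connect_hub0 y).
  by rewrite (sym_connect_sym (@dhb_adj_sym k0 k1)) connect_hub0.
- move=> x y /adj_template_edge[s [s_inv sx]].
  exists [set [set z; s z] | z in [set: V]]; split; first exact: perfect_matching_of_involution.
  by apply/imsetP; exists x; rewrite ?in_setT ?sx.
- move=> c [c_uniq c_cycle c_size c_even].
  have [s s_inv] := cycle_complement_involution c_uniq c_cycle c_size c_even.
  by exists [set [set z; s z] | z in ~: [set x in c]]; apply: perfect_matching_of_involution.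
Qed.

End Matchings.

Theorem proposition5p11 (T : finType) (e : rel T) :
  simple_graph e -> in_G2 e -> cycle_extendable e.
Proof.
move=> _ [k0 [k1 [f [k0_gt0 k1_gt0 f_bij f_adj]]]].
exact: cycle_extendable_iso f_bij f_adj (dhb_cycle_extendable k0_gt0 k1_gt0).
Qed.
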